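(* Let $G$ be the graph on $\{1,2,3,4\}$ with edge set $E=\{\{1,2\},\{2,3\},\{1,3\},\{3,4\},\{1,4\}\}$. If $x\in(\mathbb{R}^2)^4$ satisfies $\delta|_E(x)\in\mathcal L_0$, then $x$ is infinitesimally rigid, i.e. the Jacobian $\frac{\partial\,\delta|_E}{\partial x}(x)\in\mathbb{R}^{5\times 8}$ has rank $2\cdot4-3=5$.
   Context: For $x=(x_1,\dots,x_n)\in(\mathbb{R}^2)^n$ and a graph $G=(V,E)$ on $V=\{1,\dots,n\}$, $\delta|_E(x)=\big(\tfrac12\|x_i-x_j\|^2\big)_{\{i,j\}\in E}$. $\mathcal L=\{\delta|_E(x):x\in(\mathbb{R}^2)^n\}\subset\mathbb{R}^{|E|}$ and $\mathcal L_0$ denotes its interior in $\mathbb{R}^{|E|}$. The matrix $\frac{\partial\,\delta|_E}{\partial x}$ is the rigidity matrix. *)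

(* the ambient real field is an arbitrary real closed field R
   (the case of interest being the real numbers). *)
From HB Require Import structures.
From mathcomp Require Import all_boot all_order all_algebra.
Set Implicit Arguments. Unset Strict Implicit. Unset Printing Implicit Defensive.
Import Order.TTheory GRing.Theory Num.Theory.
Local Open Scope ring_scope.

(* Vertices {1,2,3,4} are encoded as 'I_4 = {0,1,2,3}; planar coordinates as 'I_2.
   A configuration x in (R^2)^4 is a 4x2 matrix: row i is the point x_{i+1}. *)

(* Edge list of G, edges indexed by 'I_5:
   {1,2},{2,3},{1,3},{3,4},{1,4}  (0-based: {0,1},{1,2},{0,2},{2,3},{0,3}). *)
Definition G_edge_list : seq (nat * nat) := [:: (0,1); (1,2); (0,2); (2,3); (0,3)]%N.
Definition edge_u (e : 'I_5) : 'I_4 := inord (nth (0,0)%N G_edge_list e).1.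
Definition edge_v (e : 'I_5) : 'I_4 := inord (nth (0,0)%N G_edge_list e).2.

Definition deltaE {R : rcfType} (x : 'M[R]_(4,2)) : 'rV[R]_5 :=
  \row_(e < 5) (2%:R^-1 * \sum_(k < 2) (x (edge_u e) k - x (edge_v e) k) ^+ 2).

Definition Lset {R : rcfType} (l : 'rV[R]_5) : Prop := exists x : 'M[R]_(4,2), deltaE x = l.

(* Interior of L in R^5 (product topology, via sup-norm balls). *)
Definition in_L0 {R : rcfType} (l : 'rV[R]_5) : Prop :=
  exists2 eps : R, 0 < eps &
    forall y : 'rV[R]_5, (forall e : 'I_5, `|y 0 e - l 0 e| < eps) -> Lset y.

(* Rigidity matrix = Jacobian of deltaE at x, a 5 x 8 matrix.  The column index
   of variable x_{i,k} is mxvec_index i k.  The partial derivative of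
   1/2 sum_k (x_{u,k} - x_{v,k})^2 w.r.t. x_{i,k} is
   ([i = u] - [i = v]) (x_{u,k} - x_{v,k}). *)
Definition rigidity_matrix {R : rcfType} (x : 'M[R]_(4,2)) : 'M[R]_(5, 4 * 2) :=
  \matrix_(e < 5) mxvec (\matrix_(i < 4, k < 2)
      (((i == edge_u e)%:R - (i == edge_v e)%:R) * (x (edge_u e) k - x (edge_v e) k))).

(* On L, the Cayley-Menger expression of the three side lengths of a triangle of G
   is the squared (doubled) area of that triangle, hence nonnegative.  As a function
   of one side length it is a concave quadratic, so it takes negative values
   arbitrarily close to each of its zeros: at an interior point of L the triangles
   012 and 023 are therefore nondegenerate.  A vector in the left kernel of the
   rigidity matrix is an equilibrium stress; at vertices 3, 2 and 1 the
   equilibrium equations involve only two unknown edge weights each, with two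
   independent edge directions, so all five weights vanish. *)

From HB Require Import structures.
From mathcomp Require Import all_boot all_order all_algebra ring lra.
Import Order.TTheory GRing.Theory Num.Theory.
Local Open Scope ring_scope.

Section CayleyMenger.
Context {R : realFieldType}.
Implicit Types a b c t eps : R.

Definition cayley_menger a b c : R :=
  2%:R * (a * b + b * c + c * a) - a ^+ 2 - b ^+ 2 - c ^+ 2.

Definition half_sqdist (p0 p1 q0 q1 : R) : R :=
  2%:R^-1 * ((p0 - q0) ^+ 2 + (p1 - q1) ^+ 2).

Definition signed_area2 (p0 p1 q0 q1 r0 r1 : R) : R :=
  (q0 - p0) * (r1 - p1) - (q1 - p1) * (r0 - p0).

(* Heron's formula. *)
Lemma cayley_menger_half_sqdist (p0 p1 q0 q1 r0 r1 : R) :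
  cayley_menger (half_sqdist p0 p1 q0 q1) (half_sqdist q0 q1 r0 r1)
                (half_sqdist p0 p1 r0 r1)
  = signed_area2 p0 p1 q0 q1 r0 r1 ^+ 2.
Proof. by rewrite /cayley_menger /half_sqdist /signed_area2; field. Qed.

Lemma cayley_menger_shiftr a b c t :
  cayley_menger a b (c + t) = cayley_menger a b c + 2%:R * t * (a + b - c) - t ^+ 2.
Proof. by rewrite /cayley_menger; ring. Qed.

Lemma cayley_menger_neg_near_root {a b c eps} :
  0 < eps -> cayley_menger a b c = 0 ->
  exists2 t, `|t| < eps & cayley_menger a b (c + t) < 0.
Proof.
move=> eps_gt0 cm0; rewrite /cayley_menger in cm0.
(* Move c by eps/2 in the direction where the linear term is nonpositive. *)
have [s_le0 | s_gt0] := lerP (a + b - c) 0.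
- exists (eps / 2%:R); first by rewrite ger0_norm; lra.
  by rewrite cayley_menger_shiftr /cayley_menger cm0; nra.
- exists (- (eps / 2%:R)); first by rewrite normrN ger0_norm; lra.
  by rewrite cayley_menger_shiftr /cayley_menger cm0; nra.
Qed.

End CayleyMenger.

Lemma det2_indep (R : idomainType) (a b u0 u1 w0 w1 : R) :
  a * u0 + b * w0 = 0 -> a * u1 + b * w1 = 0 -> u0 * w1 - u1 * w0 != 0 ->
  a = 0 /\ b = 0.
Proof.
move=> e0 e1 D_neq0.
have aD : a * (u0 * w1 - u1 * w0) = w1 * (a * u0 + b * w0) - w0 * (a * u1 + b * w1)
  by ring.
have bD : b * (u0 * w1 - u1 * w0) = u0 * (a * u1 + b * w1) - u1 * (a * u0 + b * w0)
  by ring.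
rewrite e0 e1 !mulr0 subrr in aD bD.
by split; apply/eqP; [move: aD | move: bD] => /eqP;
  rewrite mulf_eq0 (negbTE D_neq0) orbF.
Qed.

Lemma sum_ord2 (V : nmodType) (F : 'I_2 -> V) : \sum_(k < 2) F k = F 0 + F 1.
Proof. by rewrite big_ord_recl big_ord1; congr (_ + F _); apply: val_inj. Qed.

Lemma sum_ord5 (V : nmodType) (F : 'I_5 -> V) :
  \sum_(e < 5) F e = F (inord 0) + F (inord 1) + F (inord 2) + F (inord 3) + F (inord 4).
Proof.
rewrite !big_ord_recr big_ord0 /= add0r.
by congr (_ + _ + _ + _ + _); congr F; apply/val_inj; rewrite /= inordK.
Qed.

Section Graph.
Context {R : rcfType}.
Implicit Types (x : 'M[R]_(4, 2)) (l : 'rV[R]_5).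

Lemma cayley_menger_neq0_in_L0 {l} {i j k : 'I_5} :
  k != i -> k != j -> in_L0 l ->
  (forall y : 'rV[R]_5, Lset y -> 0 <= cayley_menger (y 0 i) (y 0 j) (y 0 k)) ->
  cayley_menger (l 0 i) (l 0 j) (l 0 k) != 0.
Proof.
move=> ki kj [eps eps_gt0 ball_L] cm_ge0; apply/eqP => cm0.
have [t t_lt cm_lt0] := cayley_menger_neg_near_root eps_gt0 cm0.
pose y := l + t *: delta_mx 0 k.
have yE e : y 0 e = l 0 e + t * (e == k)%:R by rewrite !mxE eqxx.
have Ly : Lset y.
  apply: ball_L => e; rewrite yE addrC addKr normrM.
  by case: (e == k); rewrite ?normr1 ?normr0 ?mulr1 ?mulr0.
have := cm_ge0 y Ly; rewrite !yE eqxx ![_ == k]eq_sym (negbTE ki) (negbTE kj).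
by rewrite !mulr0 !addr0 mulr1 leNgt cm_lt0.
Qed.

Lemma edge_u_inord (e : nat) :
  (e < 5)%N -> edge_u (inord e) = inord (nth (0, 0)%N G_edge_list e).1.
Proof. by move=> e_lt; rewrite /edge_u inordK. Qed.

Lemma edge_v_inord (e : nat) :
  (e < 5)%N -> edge_v (inord e) = inord (nth (0, 0)%N G_edge_list e).2.
Proof. by move=> e_lt; rewrite /edge_v inordK. Qed.

Lemma inord4_eq (i j : nat) :
  (i < 4)%N -> (j < 4)%N -> ((inord i : 'I_4) == inord j) = (i == j).
Proof. by move=> i_lt j_lt; rewrite -val_eqE /= !inordK. Qed.

Definition tri_area2 x (i j k : nat) : R :=
  signed_area2 (x (inord i) 0) (x (inord i) 1) (x (inord j) 0) (x (inord j) 1)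
               (x (inord k) 0) (x (inord k) 1).

Lemma deltaE_half_sqdist x (e : 'I_5) :
  deltaE x 0 e = half_sqdist (x (edge_u e) 0) (x (edge_u e) 1)
                             (x (edge_v e) 0) (x (edge_v e) 1).
Proof. by rewrite /deltaE mxE sum_ord2. Qed.

Lemma cayley_menger_deltaE_012 x :
  cayley_menger (deltaE x 0 (inord 0)) (deltaE x 0 (inord 1)) (deltaE x 0 (inord 2))
  = tri_area2 x 0 1 2 ^+ 2.
Proof.
rewrite !deltaE_half_sqdist !edge_u_inord // !edge_v_inord //=.
exact: cayley_menger_half_sqdist.
Qed.

Lemma cayley_menger_deltaE_023 x :
  cayley_menger (deltaE x 0 (inord 2)) (deltaE x 0 (inord 3)) (deltaE x 0 (inord 4))
  = tri_area2 x 0 2 3 ^+ 2.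
Proof.
rewrite !deltaE_half_sqdist !edge_u_inord // !edge_v_inord //=.
exact: cayley_menger_half_sqdist.
Qed.

Lemma area_neq0_in_L0 {x} {i j k : 'I_5} {A : 'M[R]_(4, 2) -> R} :
  (forall x', cayley_menger (deltaE x' 0 i) (deltaE x' 0 j) (deltaE x' 0 k) = A x' ^+ 2) ->
  in_L0 (deltaE x) -> k != i -> k != j -> A x != 0.
Proof.
move=> cmE L0 ki kj; move: (cayley_menger_neq0_in_L0 ki kj L0).
rewrite cmE sqrf_eq0; apply.
by move=> _ [x' <-]; rewrite cmE sqr_ge0.
Qed.

Lemma rigidity_matrix_column x (v : 'rV[R]_5) (i : 'I_4) (k : 'I_2) :
  (v *m rigidity_matrix x) 0 (mxvec_index i k) =
  \sum_(e < 5) v 0 e * (((i == edge_u e)%:R - (i == edge_v e)%:R) *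
                        (x (edge_u e) k - x (edge_v e) k)).
Proof. by rewrite mxE; apply: eq_bigr => e _; rewrite !mxE mxvecE mxE. Qed.

Lemma rigidity_left_kernel_equilibrium {x} {v : 'rV[R]_5} (k : 'I_2) :
  v *m rigidity_matrix x = 0 ->
  [/\ v 0 (inord 0) * (x (inord 1) k - x (inord 0) k)
       + v 0 (inord 1) * (x (inord 1) k - x (inord 2) k) = 0,
      v 0 (inord 1) * (x (inord 2) k - x (inord 1) k)
       + v 0 (inord 2) * (x (inord 2) k - x (inord 0) k)
       + v 0 (inord 3) * (x (inord 2) k - x (inord 3) k) = 0
    & v 0 (inord 3) * (x (inord 3) k - x (inord 2) k)
       + v 0 (inord 4) * (x (inord 3) k - x (inord 0) k) = 0].
Proof.
move=> v_ker.
have col (i : nat) : \sum_(e < 5) v 0 e *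
    ((((inord i : 'I_4) == edge_u e)%:R - (inord i == edge_v e)%:R) *
     (x (edge_u e) k - x (edge_v e) k)) = 0.
  by rewrite -rigidity_matrix_column v_ker mxE.
have := col 1%N; have := col 2%N; have := col 3%N.
rewrite !sum_ord5 !edge_u_inord // !edge_v_inord //= !inord4_eq //=.
by move=> c3 c2 c1; split; [rewrite -c1 | rewrite -c2 | rewrite -c3]; ring.
Qed.

(* In each step below the determinant of the two edge directions is, up to sign,
   one of the two triangle areas. *)
Lemma rigidity_matrix_row_free x :
  tri_area2 x 0 1 2 != 0 -> tri_area2 x 0 2 3 != 0 -> row_free (rigidity_matrix x).
Proof.
move=> A012 A023; apply/inj_row_free => v v_ker.
have [e1 e2 e3] := rigidity_left_kernel_equilibrium 0 v_ker.
have [e1' e2' e3'] := rigidity_left_kernel_equilibrium 1 v_ker.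
have [v3 v4] : v 0 (inord 3) = 0 /\ v 0 (inord 4) = 0.
  apply: det2_indep e3 e3' _; apply: contra_neq A023 => D0.
  by rewrite /tri_area2 /signed_area2; lra.
move: e2 e2'; rewrite v3 !mul0r !addr0 => e2 e2'.
have [v1 v2] : v 0 (inord 1) = 0 /\ v 0 (inord 2) = 0.
  apply: det2_indep e2 e2' _; apply: contra_neq A012 => D0.
  by rewrite /tri_area2 /signed_area2; lra.
have [v0 _] : v 0 (inord 0) = 0 /\ v 0 (inord 1) = 0.
  apply: det2_indep e1 e1' _; apply: contra_neq A012 => D0.
  by rewrite /tri_area2 /signed_area2; lra.
apply/rowP => e; rewrite mxE -[e]inord_val.
by case: e => [[|[|[|[|[|]]]]] ?].
Qed.

End Graph.

Theorem lemma4 (R : rcfType) (x : 'M[R]_(4,2)) :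
  in_L0 (deltaE x) -> \rank (rigidity_matrix x) = (2 * 4 - 3)%N.
Proof.
move=> L0.
have A012 : tri_area2 x 0 1 2 != 0.
  by apply: (area_neq0_in_L0 cayley_menger_deltaE_012 L0); rewrite -val_eqE /= !inordK.
have A023 : tri_area2 x 0 2 3 != 0.
  by apply: (area_neq0_in_L0 cayley_menger_deltaE_023 L0); rewrite -val_eqE /= !inordK.
exact/eqP/rigidity_matrix_row_free.
Qed.
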